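(* Let $n\ge1$, $b>0$, let $\varepsilon_1,\dots,\varepsilon_n$ be i.i.d. with $\mathbf{P}(\varepsilon_i=\pm1)=\frac12$ and $R_n:=\sum_{i=1}^n\varepsilon_i$. For $y\in\mathbb{R}$ put $x:=\frac{y\sqrt n}{2b}+\frac n2$. Let $u_*$ be the unique solution in $(0,1)$ of $\ln\frac{1-u}{-\ln u}-1-\frac12\frac{(1+u)\ln u}{1-u}=0$ (numerically $u_*=0.00505778\ldots$), $u_{**}:=\frac{u_*}{1-u_*}$, and $j_{**}:=\big\lfloor\frac{n-u_{**}}{1+u_{**}}\big\rfloor$. Then $$c_3\,\mathbf{P}^{\mathrm{Lin,LC}}\Big(R_n\ge1+\frac{y\sqrt n}{b}\Big)\le c_3\,\mathbf{P}^{\mathrm{LC}}\Big(R_n\ge\frac{y\sqrt n}{b}\Big)$$ for all $y$ with $x\le j_{**}$, where $c_3:=2e^3/9$. Moreover, if $n\le196$, this inequality holds for all $y$ with $x\le n$.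
   Context: $z\mapsto\mathbf{P}^{\mathrm{LC}}(R_n\ge z)$ is the least log-concave majorant on $\mathbb{R}$ of $z\mapsto\mathbf{P}(R_n\ge z)$. $\mathbf{P}^{\mathrm{Lin}}(R_n\ge z)$ is the linear interpolation of $z\mapsto\mathbf{P}(R_n\ge z)$ over the lattice $\{n+2k:k\in\mathbb{Z}\}$: $\mathbf{P}^{\mathrm{Lin}}(R_n\ge z)=(1-\gamma)\mathbf{P}(R_n\ge n+2k)+\gamma\mathbf{P}(R_n\ge n+2k+2)$ whenever $\gamma:=(z-n-2k)/2\in[0,1]$; $\mathbf{P}^{\mathrm{Lin,LC}}(R_n\ge\cdot)$ is the least log-concave majorant of $\mathbf{P}^{\mathrm{Lin}}(R_n\ge\cdot)$ on $\mathbb{R}$. Least log-concave majorant of $\phi\ge0$: the smallest $g\ge\phi$ with $g\ge0$ and $\ln g$ concave (values $-\infty$ allowed). *)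

From HB Require Import structures.
From mathcomp Require Import all_boot all_order all_algebra.
From mathcomp Require Import all_classical all_reals.
From mathcomp Require Import all_analysis.
Set Implicit Arguments. Unset Strict Implicit. Unset Printing Implicit Defensive.
Import Order.TTheory GRing.Theory Num.Theory.
Local Open Scope classical_set_scope.
Local Open Scope ring_scope.

Section Defs.
Variable R : realType.

Definition Rsum (n : nat) (e : {ffun 'I_n -> bool}) : R :=
  \sum_(i < n) (if e i then 1 else -1).

Definition tailR (n : nat) (z : R) : R :=
  #|[pred e : {ffun 'I_n -> bool} | z <= Rsum e]|%:R / 2 ^+ n.

(* linear interpolation of tailR n over the lattice n + 2Z *)
Definition tailLin (n : nat) (z : R) : R :=
  let k : int := Num.floor ((z - n%:R) / 2) in
  let g : R := (z - n%:R) / 2 - k%:~R in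
  (1 - g) * tailR n (n%:R + 2 * k%:~R) + g * tailR n (n%:R + 2 * k%:~R + 2).

(* g >= 0 and ln g concave on R (with ln 0 = -oo) *)
Definition log_concave (g : R -> R) : Prop :=
  (forall x, 0 <= g x) /\
  (forall x y t, 0 < t < 1 ->
     g x `^ t * g y `^ (1 - t) <= g (t * x + (1 - t) * y)).

(* least log-concave majorant of phi on R, as the pointwise infimum of all
   log-concave majorants *)
Definition LCmaj (phi : R -> R) (z : R) : R :=
  inf [set g z | g in [set g : R -> R | log_concave g /\ forall w, phi w <= g w]].

Definition c3 : R := 2 * expR 3 / 9.

End Defs.

From HB Require Import structures.
From mathcomp Require Import all_boot all_order all_algebra.
From mathcomp Require Import all_classical all_reals.
From mathcomp Require Import all_analysis.
From mathcomp Require Import zify lra ring.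
Set Implicit Arguments.
Unset Strict Implicit.
Unset Printing Implicit Defensive.
Import Order.TTheory GRing.Theory Num.Theory.

(* Write q k := P(R_n >= n + 2k) for k : int.  Since R_n = n - 2F with F the
   number of minus signs, q k = 0 for k > 0 and q (-j) is 2^-n times a partial
   sum of binomial coefficients; these partial sums are log-concave, so q lies
   below the geometric sequence through any two consecutive values q (m - 1),
   q m.  Hence, for w in the lattice cell [n + 2(m - 1), n + 2m], the
   log-linear function through these two values shifted right by 1 (half a
   lattice step) majorizes the linear interpolation of q, provided the ratio
   r = q m / q (m - 1) satisfies 1 - g + g r <= r^(g - 1/2) for g in [1/2, 1];
   and its value at 1 + w is the geometric interpolation of q (m - 1), q m at
   w, which lies below every log-concave majorant of P(R_n >= .).  The ratio
   condition passes to larger r by concavity of r^a, holds at u_* by a tangent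
   line argument (the defining equation of u_* says the tangent is attained)
   and at 1/197 numerically, and r >= min(1, (j + 1)/(n + 1)) for
   j = floor((n - w)/2). *)

Definition binom_psum (n j : nat) : nat := \sum_(i < j.+1) 'C(n, i).

Lemma binom_psumS n j : binom_psum n j.+1 = binom_psum n j + 'C(n, j.+1).
Proof. by rewrite /binom_psum big_ord_recr. Qed.

Lemma binom_psum_gt0 n j : 0 < binom_psum n j.
Proof. by rewrite /binom_psum big_ord_recl bin0. Qed.

Lemma bin_le_binom_psum n j : 'C(n, j) <= binom_psum n j.
Proof. by rewrite /binom_psum big_ord_recr leq_addl. Qed.

Lemma bin_log_concave n k : 'C(n, k.+2) * 'C(n, k) <= 'C(n, k.+1) * 'C(n, k.+1).
Proof.
have [nk|kn] := leqP n k.+1; first by rewrite bin_small ?mul0n // ltnS.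
have pos : 0 < k.+2 * (n - k) by rewrite muln_gt0 /=; lia.
rewrite -(leq_pmul2r pos).
have -> : 'C(n, k.+2) * 'C(n, k) * (k.+2 * (n - k))
    = (k.+2 * 'C(n, k.+2)) * ((n - k) * 'C(n, k)) by ring.
rewrite (mul_bin_left n k.+1) -(mul_bin_left n k).
have -> : (n - k.+1) * 'C(n, k.+1) * (k.+1 * 'C(n, k.+1))
    = 'C(n, k.+1) * 'C(n, k.+1) * ((n - k.+1) * k.+1) by ring.
by rewrite leq_mul2l; apply/orP; right; nia.
Qed.

Lemma binom_psum_step n j :
  'C(n, j.+2) * binom_psum n j <= 'C(n, j.+1) * binom_psum n j.+1.
Proof.
elim: j => [|j IH].
  rewrite binom_psumS /binom_psum big_ord1 bin0 muln1 mulnDr.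
  by have := bin_log_concave n 0; rewrite bin0 muln1; lia.
rewrite (binom_psumS n j.+1) mulnDr [in X in X <= _]binom_psumS mulnDr.
apply: leq_add; last exact: bin_log_concave.
have [C0|Cpos] := posnP 'C(n, j.+2).
  by rewrite (@bin_small n j.+3) ?mul0n // ltnS ltnW // ltnNge -bin_gt0 C0.
rewrite -(leq_pmul2l Cpos) mulnCA (leq_trans (leq_mul (leqnn _) IH)) //.
by rewrite !mulnA leq_mul2r bin_log_concave orbT.
Qed.

Lemma binom_psum_log_concave n j :
  binom_psum n j * binom_psum n j.+2 <= binom_psum n j.+1 * binom_psum n j.+1.
Proof.
have := binom_psum_step n j; rewrite !binom_psumS.
have := binom_psumS n j; lia.
Qed.

Lemma binom_psum_ratio n j :
  minn j.+1 n.+1 * binom_psum n j.+1 <= n.+1 * binom_psum n j.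
Proof.
have [jn|nj] := ltnP j n.
  rewrite (@minn_idPl j.+1 n.+1 (ltnW jn)) binom_psumS mulnDr mul_bin_left.
  have := bin_le_binom_psum n j; nia.
by rewrite (@minn_idPr j.+1 n.+1 nj) binom_psumS bin_small ?addn0 // ltnS.
Qed.

Lemma card_sets_le (T : finType) j :
  #|[set A : {set T} | #|A| <= j]| = binom_psum #|T| j.
Proof.
elim: j => [|j IH].
  rewrite /binom_psum big_ord1 -card_draws; apply: eq_card => A.
  by rewrite !inE leqn0.
rewrite binom_psumS -IH -card_draws -(cardsID [set A : {set T} | #|A| <= j]).
by congr (_ + _); apply: eq_card => A; rewrite !inE; lia.
Qed.

Definition nminus {n} (e : {ffun 'I_n -> bool}) : nat := #|[set i | ~~ e i]|.

Lemma card_nminus_le n j :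
  #|[pred e : {ffun 'I_n -> bool} | nminus e <= j]| = binom_psum n j.
Proof.
pose minus_set (e : {ffun 'I_n -> bool}) := [set i | ~~ e i].
pose sign_of (A : {set 'I_n}) := [ffun i => i \notin A].
have minus_setK : cancel minus_set sign_of.
  by move=> e; apply/ffunP => i; rewrite ffunE inE negbK.
have sign_ofK : cancel sign_of minus_set.
  by move=> A; apply/setP => i; rewrite inE ffunE negbK.
have minus_set_bij : {on [set A : {set 'I_n} | #|A| <= j], bijective minus_set}.
  exact: onW_bij (Bijective minus_setK sign_ofK).
rewrite -[n in RHS]card_ord -card_sets_le -(on_card_preimset minus_set_bij).
by apply: eq_card => e; rewrite !inE.
Qed.

Local Open Scope ring_scope.

Section RealLemmas.
Variable R : realType.

Lemma exp_partial_sum_le_expR (k : nat) (x : R) : 0 <= x ->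
  \sum_(i < k) x ^+ i / i`!%:R <= expR x.
Proof.
move=> x0; rewrite /expR -(big_mkord xpredT (fun i => x ^+ i / i`!%:R)).
apply: (nondecreasing_cvgn_le _ (is_cvg_series_exp_coeff x) k).
apply/nondecreasing_seqP => m.
by rewrite /series /= big_nat_recr //= lerDl exp_coeff_ge0.
Qed.

Lemma exprn_le_expR (N : nat) (a x : R) : a <= expR x -> 0 <= a ->
  a ^+ N <= expR (N%:R * x).
Proof. by move=> ax a0; rewrite expRM_natl lerXn2r // nnegrE expR_ge0. Qed.

Lemma expR_ln_le (a z : R) : 0 <= a <= 1 -> 0 < z ->
  expR (a * ln z) <= 1 + a * (z - 1).
Proof.
move=> /andP[a0 a1] z0.
have := convex_expR (Itv01 a0 a1) (ln z) 0.
by rewrite !convRE /= mulr0 addr0 expR0 lnK ?posrE // mulr1 /unstable.onem; lra.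
Qed.

Lemma expR_ln_concave (a l x y : R) :
  0 <= a <= 1 -> 0 <= l <= 1 -> 0 < x -> 0 < y ->
  l * expR (a * ln x) + (1 - l) * expR (a * ln y)
    <= expR (a * ln (l * x + (1 - l) * y)).
Proof.
move=> a01 /andP[l0 l1] x0 y0; set m := l * x + (1 - l) * y.
have m0 : 0 < m by rewrite /m; nra.
have split_m v : 0 < v ->
    expR (a * ln v) = expR (a * ln m) * expR (a * ln (v / m)).
  by move=> v0; rewrite -expRD -mulrDr ln_div ?posrE // addrC subrK.
rewrite (split_m x) // (split_m y) // mulrCA [X in _ + X]mulrCA -mulrDr.
rewrite ler_piMr ?expR_gt0 //.
have hx := expR_ln_le a01 (divr_gt0 x0 m0).
have hy := expR_ln_le a01 (divr_gt0 y0 m0).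
rewrite -[leRHS](_ : l * (1 + a * (x / m - 1))
                     + (1 - l) * (1 + a * (y / m - 1)) = 1).
  by apply: lerD; apply: ler_wpM2l; lra.
by rewrite /m; field; rewrite -/m gt_eqF.
Qed.

Definition chord_le_shifted_geom (r : R) :=
  forall g, 2^-1 <= g <= 1 -> 1 - g + g * r <= expR ((g - 2^-1) * ln r).

Lemma chord_le_shifted_geomW (r g : R) :
  0 < r <= 1 -> chord_le_shifted_geom r -> 0 <= g <= 1 ->
  1 - g + g * r <= expR ((g - 2^-1) * ln r).
Proof.
move=> /andP[r0 r1] hr /andP[g0 g1].
have [gh|gh] := leP g (2^-1); last by apply: hr; rewrite ltW.
have : 0 <= (g - 2^-1) * ln r by rewrite mulr_le0 ?ln_le0 // subr_le0.
by have := expR_ge1Dx ((g - 2^-1) * ln r); nra.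
Qed.

Lemma chord_le_shifted_geom_mono (r0 r : R) : 0 < r0 -> r0 <= r <= 1 ->
  chord_le_shifted_geom r0 -> chord_le_shifted_geom r.
Proof.
move=> r00 /andP[r0r r1] hr0 g g01; have /andP[g0 g1] := g01.
have [r0_1|r0_lt1] := eqVneq r0 1.
  have -> : r = 1 by apply/eqP; rewrite eq_le r1 -r0_1 r0r.
  by rewrite ln1 mulr0 expR0; lra.
have {r0_lt1}r0_lt1 : r0 < 1 by rewrite lt_neqAle r0_lt1 (le_trans r0r r1).
set l := (1 - r) / (1 - r0).
have l01 : 0 <= l <= 1 by rewrite divr_ge0 ?ler_pdivrMr /=; lra.
have -> : r = l * r0 + (1 - l) * 1 by rewrite /l; field; lra.
have a01 : 0 <= g - 2^-1 <= 1 by lra.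
apply: le_trans (expR_ln_concave a01 l01 r00 ltr01).
have := hr0 g g01; rewrite ln1 mulr0 expR0; case/andP: l01 => l0 l1; nra.
Qed.

Lemma expR_ge_tangent (a x : R) : expR a * (1 + (x - a)) <= expR x.
Proof.
by rewrite -[X in _ <= expR X](subrKC a x) expRD ler_pM2l ?expR_gt0 ?expR_ge1Dx.
Qed.

(* With s := (g - 1/2) ln (1/r) the chord is at most the line A - B s, which
   lies below the tangent of the convex function exp (- s) at s = tau (this is
   the last hypothesis), hence below exp (- s). *)
Lemma chord_le_shifted_geom_tangent (r L : R) : 0 < r < 1 -> - ln r <= L ->
  (1 - r) / L <= expR (1 - (1 + r) * L / (2 * (1 - r))) ->
  chord_le_shifted_geom r.
Proof.
move=> /andP[r0 r1] lnrL hB g /andP[g0 g1].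
have lr : 0 < - ln r by rewrite oppr_gt0 ln_lt0 ?r0.
have L0 : 0 < L by apply: lt_le_trans lnrL.
set A := (1 + r) / 2; set B := (1 - r) / L; set tau := A / B - 1.
set s := (g - 2^-1) * - ln r.
have B0 : 0 < B by rewrite divr_gt0 // subr_gt0.
have tauE : 1 - (1 + r) * L / (2 * (1 - r)) = - tau.
  by rewrite /tau /A /B; field; rewrite ?gt_eqF // subr_gt0.
have {hB}hB : B <= expR (- tau) by rewrite -tauE.
have chord_le : 1 - g + g * r <= A - B * s.
  have : B * s <= (1 - r) * (g - 2^-1).
    by rewrite /B /s mulrAC ler_pdivrMr // mulrA ler_wpM2l //; nra.
  rewrite /A; lra.
have ABtau : A = B * (1 + tau) by rewrite /tau; field; rewrite gt_eqF.
rewrite (_ : (g - 2^-1) * ln r = - s); last by rewrite /s mulrN opprK.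
apply: le_trans chord_le _.
have [tau_s|s_large] := lerP 0 (1 + tau - s).
  by have := expR_ge_tangent (- tau) (- s); nra.
by apply: le_trans (expR_ge0 _); nra.
Qed.

Lemma chord_le_shifted_geom_root (u : R) : 0 < u < 1 ->
  ln ((1 - u) / (- ln u)) - 1 - 2^-1 * ((1 + u) * ln u / (1 - u)) = 0 ->
  chord_le_shifted_geom u.
Proof.
move=> u01 hu; apply: (chord_le_shifted_geom_tangent u01 (lexx _)).
case/andP: u01 => u0 u1.
have lu : 0 < - ln u by rewrite oppr_gt0 ln_lt0 ?u0.
have {}hu : ln ((1 - u) / - ln u) = 1 + 2^-1 * ((1 + u) * ln u / (1 - u)).
  by lra.
have -> : 1 - (1 + u) * - ln u / (2 * (1 - u)) = ln ((1 - u) / - ln u).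
  by rewrite hu; field; rewrite subr_eq0 gt_eqF.
by rewrite lnK // posrE divr_gt0 // subr_gt0.
Qed.

(* [ln 197 <= 1321/250] from the Taylor polynomial of degree 7 of exp at
   1321/2000, and the tangency condition from (1 + x)^4096 <= exp (4096 x),
   rounded once after the first 64 factors. *)
Lemma chord_le_shifted_geom_inv197 : chord_le_shifted_geom (197%:R^-1 : R).
Proof.
have r01 : 0 < (197%:R^-1 : R) < 1 by rewrite invr_gt0 invf_lt1 ?ltr0n ?ltr1n.
apply: (chord_le_shifted_geom_tangent (L := 1321%:R / 250%:R) r01).
  rewrite lnV ?posrE // opprK -ler_expR lnK ?posrE //.
  have h8 : 3405%:R / 1759%:R <= expR (1321%:R / 2000%:R) :> R.
    apply: le_trans (exp_partial_sum_le_expR 8 _); last by lra.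
    by rewrite !big_ord_recr big_ord0 /= !factS fact0; lra.
  rewrite (_ : 1321%:R / 250%:R = 8%:R * (1321%:R / 2000%:R)); last by field.
  by apply: le_trans (exprn_le_expR 8 h8 _); lra.
set x : R := (49%:R * 1000%:R - 1321%:R * 99%:R) / (49%:R * 1000%:R * 4096%:R).
have -> : 1 - (1 + 197%:R^-1) * (1321%:R / 250%:R) / (2 * (1 - 197%:R^-1))
    = 64%:R * (64%:R * x) :> R by rewrite /x; field.
have h64 : 3822%:R / 3923%:R <= expR (64%:R * x).
  by apply: le_trans (exprn_le_expR 64 (expR_ge1Dx x) _); rewrite /x; lra.
by apply: le_trans (exprn_le_expR 64 h64 _); lra.
Qed.

Lemma concave_seq_le_secant (s : nat -> R) :
  (forall j, s j + s j.+2 <= 2 * s j.+1) ->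
  forall i j, s j <= s i + (j%:R - i%:R) * (s i.+1 - s i).
Proof.
move=> s_cvx i j.
have d_noninc : {homo (fun k => s k.+1 - s k) : k l / (k <= l)%N >-> l <= k}.
  by apply/nonincreasing_seqP => k; have := s_cvx k; lra.
have [ij|ji] := leqP i j.
  rewrite -lerBlDl -(telescope_sumr s ij) -natrB // mulr_natl -sumr_const_nat.
  by apply: ler_sum_nat => k /andP[ik _]; apply: d_noninc.
rewrite -opprB -natrB ?(ltnW ji) // mulNr mulr_natl -sumr_const_nat.
rewrite lerBrDl -lerBrDr -(telescope_sumr s (ltnW ji)).
by apply: ler_sum_nat => k /andP[_ ki]; apply: d_noninc; rewrite ltnW.
Qed.

Lemma log_concave_seq_le_geom (s : nat -> R) :
  (forall j, 0 < s j) -> (forall j, s j * s j.+2 <= s j.+1 ^+ 2) ->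
  forall i j, s j <= s i * expR ((j%:R - i%:R) * ln (s i.+1 / s i)).
Proof.
move=> s_gt0 s_lcv i j.
have ln_cvx k : ln (s k) + ln (s k.+2) <= 2 * ln (s k.+1).
  rewrite -lnM ?posrE // mulr_natl -lnXn //.
  by rewrite ler_ln ?posrE ?mulr_gt0 ?exprn_gt0.
rewrite -[s j]lnK ?posrE // -[X in X * _]lnK ?posrE // -expRD ler_expR.
rewrite ln_div ?posrE //.
exact: (concave_seq_le_secant (s := fun k => ln (s k))).
Qed.

Lemma LCmaj_le_majorant (phi h : R -> R) (z : R) :
  log_concave h -> (forall w, phi w <= h w) -> LCmaj phi z <= h z.
Proof.
move=> h_lc h_maj; apply: ge_inf; last by exists h.
by exists 0 => _ [g [[g_ge0 _] _] <-].
Qed.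

Lemma LCmaj_ge_interp (phi g0 : R -> R) (x y t : R) :
  log_concave g0 -> (forall w, phi w <= g0 w) ->
  0 < phi x -> 0 < phi y -> 0 <= t <= 1 ->
  expR (t * ln (phi x) + (1 - t) * ln (phi y))
    <= LCmaj phi (t * x + (1 - t) * y).
Proof.
move=> g0_lc g0_maj x0 y0 /andP[t0 t1].
apply: lb_le_inf; first by exists (g0 (t * x + (1 - t) * y)), g0.
move=> _ [g [[g_ge0 g_lc] g_maj] <-].
have [->|tn0] := eqVneq t 0.
  by rewrite !mul0r subr0 !mul1r !add0r lnK ?posrE.
have [->|tn1] := eqVneq t 1.
  by rewrite !mul1r subrr !mul0r !addr0 lnK ?posrE.
have t01 : 0 < t < 1 by rewrite !lt_neqAle eq_sym tn0 tn1 t0 t1.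
have gx : 0 < g x := lt_le_trans x0 (g_maj x).
have gy : 0 < g y := lt_le_trans y0 (g_maj y).
apply: le_trans (g_lc x y t t01); rewrite /powR !gt_eqF // -expRD ler_expR.
have lx : ln (phi x) <= ln (g x) by rewrite ler_ln ?posrE ?g_maj.
have ly : ln (phi y) <= ln (g y) by rewrite ler_ln ?posrE ?g_maj.
by apply: lerD; apply: ler_wpM2l => //; lra.
Qed.

Lemma log_concave1 : log_concave (fun _ : R => 1 : R).
Proof. by split=> // x y t _; rewrite powR1 mulr1. Qed.

Lemma log_concave_expR_affine (f : R -> R) :
  (forall x y t, f (t * x + (1 - t) * y) = t * f x + (1 - t) * f y) ->
  log_concave (fun z => expR (f z)).
Proof.
move=> f_aff; split=> [x|x y t _]; first exact: expR_ge0.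
by rewrite f_aff -!expRM -expRD (mulrC (f x)) (mulrC (f y)).
Qed.

End RealLemmas.

Section LatticeTail.
Variables (R : realType) (n : nat).

Lemma Rsum_nminus (e : {ffun 'I_n -> bool}) :
  @Rsum R n e = n%:R - 2 * (nminus e)%:R.
Proof.
rewrite /Rsum (eq_bigr (fun i => 1 - 2 * ((~~ e i : nat)%:R : R))); last first.
  by move=> i _; case: (e i) => /=; lra.
rewrite sumrB sumr_const card_ord -mulr_sumr -natr_sum /nminus -sum1_card.
rewrite [in RHS]big_mkcond /=; congr (_ - 2 * _%:R).
by apply: eq_bigr => i _; rewrite inE; case: (e i).
Qed.

Lemma tailR_le1 (z : R) : tailR n z <= 1.
Proof.
rewrite /tailR ler_pdivrMr ?exprn_gt0 // mul1r -natrX ler_nat.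
by rewrite (leq_trans (max_card _)) // card_ffun card_bool card_ord.
Qed.

Lemma le_tailR (z z' : R) : z <= z' -> tailR n z' <= tailR n z.
Proof.
move=> zz'; rewrite /tailR ler_wpM2r ?invr_ge0 ?exprn_ge0 // ler_nat.
apply: subset_leq_card; apply/fintype.subsetP => e.
by rewrite !inE; apply: le_trans.
Qed.

Definition lattice_tail (k : int) : R := tailR n (n%:R + 2 * k%:~R).

Local Notation q := lattice_tail.

Lemma lattice_le_Rsum (k : int) (e : {ffun 'I_n -> bool}) :
  (n%:R + 2 * k%:~R <= @Rsum R n e) = (k <= - (nminus e)%:Z).
Proof.
by rewrite Rsum_nminus lerD2l -mulrN ler_pM2l // pmulrn -intrN ler_int.
Qed.

Lemma lattice_tailN (j : nat) : q (- j%:Z) = (binom_psum n j)%:R / 2 ^+ n.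
Proof.
rewrite /q /tailR -card_nminus_le; congr (_%:R / _); apply: eq_card => e.
by rewrite !inE lattice_le_Rsum; lia.
Qed.

Lemma lattice_tail_eq0 (k : int) : 0 < k -> q k = 0.
Proof.
move=> k0; rewrite /q /tailR (_ : #|_| = 0%N) ?mul0r //; apply: eq_card0 => e.
by rewrite !inE lattice_le_Rsum; lia.
Qed.

Lemma lattice_tail_gt0 (k : int) : k <= 0 -> 0 < q k.
Proof.
move=> k0; have -> : k = - `|k|%N%:Z by lia.
by rewrite lattice_tailN divr_gt0 ?exprn_gt0 // ltr0n binom_psum_gt0.
Qed.

Local Notation ratio m := (q m / q (m - 1)).

Lemma lattice_tail_le_geom (m : int) : m <= 0 ->
  forall k, q k <= q m * expR ((k - m)%:~R * ln (ratio m)).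
Proof.
move=> m0 k; set s := fun j : nat => q (- j%:Z).
have s_gt0 j : 0 < s j by apply: lattice_tail_gt0; lia.
have s_lcv j : s j * s j.+2 <= s j.+1 ^+ 2.
  rewrite /s !lattice_tailN expr_div_n mulf_div.
  rewrite ler_pM2r ?invr_gt0 ?mulr_gt0 ?exprn_gt0 //.
  by rewrite -natrX -natrM ler_nat binom_psum_log_concave.
have [k0|k0] := ltrP 0 k.
  by rewrite lattice_tail_eq0 // mulr_ge0 ?expR_ge0 ?ltW ?lattice_tail_gt0.
have [i ->] : exists i : nat, m = - i%:Z by exists `|m|%N; lia.
have [j ->] : exists j : nat, k = - j%:Z by exists `|k|%N; lia.
apply: le_trans (log_concave_seq_le_geom s_gt0 s_lcv i j) _; rewrite /s.
have q_gt0 l : 0 < q (- l%:Z) by apply: lattice_tail_gt0; lia.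
have -> : - i%:Z - 1 = - i.+1%:Z by lia.
have ln_ratio :
    ln (q (- i%:Z) / q (- i.+1%:Z)) = - ln (q (- i.+1%:Z) / q (- i%:Z)).
  rewrite -lnV ?posrE ?(divr_gt0 (q_gt0 _) (q_gt0 _)) //.
  by rewrite (invf_div (q _) (q _)).
rewrite (_ : (- j%:Z - - i%:Z)%:~R * _
           = (j%:R - i%:R) * ln (q (- i.+1%:Z) / q (- i%:Z))) //.
by rewrite ln_ratio intrB !intrN -!pmulrn; ring.
Qed.

Lemma lattice_tail_ratio (j : nat) :
  (minn j.+1 n.+1)%:R / n.+1%:R <= ratio (- j%:Z).
Proof.
have -> : - j%:Z - 1 = - j.+1%:Z by lia.
have S_gt0 i : 0 < (binom_psum n i)%:R :> R by rewrite ltr0n binom_psum_gt0.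
have D_gt0 : 0 < 2 ^+ n :> R by rewrite exprn_gt0.
rewrite !lattice_tailN.
rewrite (_ : _ / _ / (_ / _)
           = (binom_psum n j)%:R / (binom_psum n j.+1)%:R); last first.
  by field; rewrite !gt_eqF.
rewrite ler_pdivrMr ?ltr0Sn // mulrAC ler_pdivlMr // -!natrM ler_nat.
by rewrite (mulnC (binom_psum n j)) binom_psum_ratio.
Qed.

Lemma tailLin_le_shifted_geom (m : int) :
  m <= 0 -> chord_le_shifted_geom (ratio m) -> forall z,
  tailLin n z <= q m * expR (((z - n%:R) / 2 - m%:~R - 2^-1) * ln (ratio m)).
Proof.
move=> m0 hr z; rewrite /tailLin /=.
set k := Num.floor _; set g := _ - k%:~R.
have g01 : 0 <= g <= 1.
  have /andP[] := floor_itv ((z - n%:R) / 2).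
  by rewrite intrD mulr1z -/k /g; lra.
have qm_gt0 : 0 < q m := lattice_tail_gt0 m0.
have qm1_gt0 : 0 < q (m - 1) by apply: lattice_tail_gt0; lia.
have r_gt0 : 0 < ratio m by rewrite divr_gt0.
have r_le1 : ratio m <= 1.
  by rewrite ler_pdivrMr // mul1r le_tailR // lerD2l ler_pM2l // ler_int; lia.
set H := q m * expR ((k - m)%:~R * ln (ratio m)).
have qk : q k <= H := lattice_tail_le_geom m0 k.
have qk1 : q (k + 1) <= H * ratio m.
  have := lattice_tail_le_geom m0 (k + 1).
  by rewrite addrAC intrD mulr1z mulrDl mul1r expRD (lnK r_gt0) mulrA.
have -> : tailR n (n%:R + 2 * k%:~R + 2) = q (k + 1).
  by rewrite /q intrD mulr1z; congr (tailR n _); ring.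
have chord_bound : (1 - g) * q k + g * q (k + 1) <= H * (1 - g + g * ratio m).
  by nra.
apply: le_trans chord_bound _.
apply: le_trans (ler_wpM2l _ (chord_le_shifted_geomW _ hr g01)) _.
- by rewrite mulr_ge0 ?expR_ge0 ?ltW.
- by rewrite r_gt0 r_le1.
rewrite /H -mulrA -expRD.
rewrite [in leLHS](_ : _ + _
                     = ((z - n%:R) / 2 - m%:~R - 2^-1) * ln (ratio m)) //.
by rewrite /g intrB; ring.
Qed.

Lemma LCmaj_tailLin_cell (m : int) (w : R) : m <= 0 ->
  n%:R + 2 * (m - 1)%:~R <= w <= n%:R + 2 * m%:~R ->
  chord_le_shifted_geom (ratio m) ->
  LCmaj (tailLin n) (1 + w) <= LCmaj (tailR n) w.
Proof.
move=> m0 /andP[w_ge w_le] hr.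
have qm_gt0 : 0 < q m := lattice_tail_gt0 m0.
have qm1_gt0 : 0 < q (m - 1) by apply: lattice_tail_gt0; lia.
pose f z := ln (q m) + ((z - n%:R) / 2 - m%:~R - 2^-1) * ln (ratio m).
have f_aff x y t : f (t * x + (1 - t) * y) = t * f x + (1 - t) * f y.
  by rewrite /f; ring.
have maj z : tailLin n z <= expR (f z).
  by rewrite expRD lnK ?posrE //; apply: tailLin_le_shifted_geom.
apply: le_trans (LCmaj_le_majorant _ (log_concave_expR_affine f_aff) maj) _.
set t := (w - (n%:R + 2 * (m - 1)%:~R)) / 2.
have t01 : 0 <= t <= 1 by rewrite /t intrB; apply/andP; split; lra.
have -> : f (1 + w) = t * ln (q m) + (1 - t) * ln (q (m - 1)).
  by rewrite /f /t ln_div ?posrE // intrB; field.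
have -> : w = t * (n%:R + 2 * m%:~R) + (1 - t) * (n%:R + 2 * (m - 1)%:~R).
  by rewrite /t intrB; field.
exact: LCmaj_ge_interp (log_concave1 R) tailR_le1 qm_gt0 qm1_gt0 t01.
Qed.

Lemma LCmaj_tailLin_shift_le (r0 w : R) :
  0 < r0 <= 1 -> chord_le_shifted_geom r0 ->
  w <= n%:R -> r0 * n.+1%:R <= (Num.floor ((n%:R - w) / 2) + 1)%:~R ->
  LCmaj (tailLin n) (1 + w) <= LCmaj (tailR n) w.
Proof.
move=> /andP[r0_gt0 r0_le1] hr0 w_le.
have := floor_itv ((n%:R - w) / 2).
have [j ->] : exists j : nat, Num.floor ((n%:R - w) / 2) = j%:Z.
  by exists `|Num.floor ((n%:R - w) / 2)|%N; rewrite gez0_abs // floor_ge0; lra.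
rewrite intrD -!pmulrn => /andP[j_le j_gt] hj.
apply: (@LCmaj_tailLin_cell (- j%:Z)); first lia.
  by rewrite intrB !intrN -pmulrn; apply/andP; split; lra.
apply: (chord_le_shifted_geom_mono r0_gt0 _ hr0); apply/andP; split.
  apply: le_trans (lattice_tail_ratio j); rewrite ler_pdivlMr ?ltr0Sn //.
  by case: leqP => _; [rewrite -[j.+1%:R]natr1 | exact: ler_piMl].
have -> : - j%:Z - 1 = - j.+1%:Z by lia.
rewrite ler_pdivrMr ?lattice_tail_gt0 ?oppr_le0 // mul1r le_tailR //.
by rewrite lerD2l ler_pM2l // ler_int; lia.
Qed.
End LatticeTail.

Theorem corollary2p8 (R : realType) (n : nat) (b : R) (ustar : R) :
  (1 <= n)%N -> 0 < b ->
  0 < ustar < 1 ->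
  ln ((1 - ustar) / (- ln ustar)) - 1
    - 2^-1 * ((1 + ustar) * ln ustar / (1 - ustar)) = 0 ->
  let ustar2 := ustar / (1 - ustar) in
  let jstar2 : int := Num.floor ((n%:R - ustar2) / (1 + ustar2)) in
  (forall y : R,
     y * Num.sqrt n%:R / (2 * b) + n%:R / 2 <= jstar2%:~R ->
     c3 R * LCmaj (tailLin (R:=R) n) (1 + y * Num.sqrt n%:R / b)
       <= c3 R * LCmaj (tailR (R:=R) n) (y * Num.sqrt n%:R / b)) /\
  ((n <= 196)%N ->
   forall y : R,
     y * Num.sqrt n%:R / (2 * b) + n%:R / 2 <= n%:R ->
     c3 R * LCmaj (tailLin (R:=R) n) (1 + y * Num.sqrt n%:R / b)
       <= c3 R * LCmaj (tailR (R:=R) n) (y * Num.sqrt n%:R / b)).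
Proof.
move=> _ b_gt0 u01 hu ustar2 jstar2; have /andP[u_gt0 u_lt1] := u01.
have c3_ge0 : 0 <= c3 R by rewrite /c3 divr_ge0 // mulr_ge0 // expR_ge0.
have xE y : y * Num.sqrt n%:R / (2 * b) + n%:R / 2
           = y * Num.sqrt n%:R / b / 2 + n%:R / 2.
  by field; rewrite gt_eqF.
have nu_ge0 : 0 <= n%:R * ustar by rewrite mulr_ge0 // ltW.
split=> [y | n_le y]; rewrite xE; set w := y * Num.sqrt n%:R / b => hx;
  apply: ler_wpM2l c3_ge0 _ _ _.
  have jstar2_le : jstar2%:~R <= n%:R - n%:R * ustar - ustar.
    rewrite (_ : _ - ustar = (n%:R - ustar2) / (1 + ustar2)) ?floor_le //.
    by rewrite /ustar2; field; rewrite ?subr_eq0 ?gt_eqF //; lra.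
  apply: LCmaj_tailLin_shift_le _ (chord_le_shifted_geom_root u01 hu) _ _.
  - by rewrite u_gt0 ltW.
  - lra.
  apply: le_trans (ltW (floorD1_gt _)); rewrite -natr1; lra.
have inv197_01 : 0 < (197%:R^-1 : R) <= 1.
  by rewrite invr_gt0 ltr0n invf_le1 ?ler1n.
apply: LCmaj_tailLin_shift_le inv197_01 (@chord_le_shifted_geom_inv197 R) _ _.
  lra.
have n1_le : n.+1%:R <= 197%:R :> R by rewrite ler_nat.
have : 0 <= (Num.floor ((n%:R - w) / 2))%:~R :> R.
  by rewrite ler0z floor_ge0; lra.
by rewrite intrD; lra.
Qed.
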